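(* Let $\lambda\in P$ and integers $a\ge2$, $b\ge1$, $d\ge1$, $m\ge1$. (i) If $\lambda$ has a neighborhood of type $(a+d,b)$, then $\lambda$ has $d+1$ neighborhoods of type $(a,b)$. (ii) If $\lambda$ has a neighborhood of type $(m(a-1)+1,mb)$, then $\lambda$ has a neighborhood of type $(a,b)$.
   Context: Let $P=\mathbb Z^n$. For $\lambda\in P$, $\rho(\lambda)$ is the unique permutation of $(\frac{n-1}2,\frac{n-3}2,\dots,-\frac{n-1}2)$ with $\rho(\lambda)_i>\rho(\lambda)_j$ iff $\lambda_i>\lambda_j$ or ($\lambda_i=\lambda_j$ and $i<j$). For integers $a\ge2,b\ge1$, an ordered pair $(i,j)$ of indices is a neighborhood of type $(a,b)$ in $\lambda$ if $\rho(\lambda)_i-\rho(\lambda)_j=a-1$ and either $\lambda_i-\lambda_j\le b-1$, or $\lambda_i-\lambda_j=b$ and $j<i$. (Distinct pairs count as distinct neighborhoods.) *)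

From mathcomp Require Import all_boot all_order all_algebra.
Set Implicit Arguments. Unset Strict Implicit. Unset Printing Implicit Defensive.
Import Order.TTheory GRing.Theory Num.Theory.
Local Open Scope ring_scope.

(* Weights: lambda in P = Z^n is a function 'I_n -> int. *)

Definition rho_rank (n : nat) (lam : 'I_n -> int) (i : 'I_n) : nat :=
  #|[set j : 'I_n | (lam i < lam j) || ((lam j == lam i) && (j < i)%N)]|.

(* rho(lambda)_i : the entry of ((n-1)/2, (n-3)/2, ..., -(n-1)/2) placed at i,
   i.e. (n-1)/2 - rank_i, so that rho_i > rho_j iff
   lambda_i > lambda_j or (lambda_i = lambda_j and i < j). *)
Definition rho (n : nat) (lam : 'I_n -> int) (i : 'I_n) : rat :=
  ((n%:R - 1) / 2%:R) - (rho_rank lam i)%:R.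

Definition is_nbhd (n : nat) (lam : 'I_n -> int) (a b : int) (i j : 'I_n) : bool :=
  (rho lam i - rho lam j == (a - 1)%:~R) &&
  ((lam i - lam j <= b - 1) || ((lam i - lam j == b) && (j < i)%N)).

Definition nbhds (n : nat) (lam : 'I_n -> int) (a b : int) : {set 'I_n * 'I_n} :=
  [set p : 'I_n * 'I_n | is_nbhd lam a b p.1 p.2].

(* Encode the order defining rho by the integer key [lam i * n - i]: ties in
   [lam] are broken by the index, and the key is strictly decreasing along
   the rank.  A pair (i, j) is then a neighborhood of type (a, b) exactly when
   the rank of j exceeds that of i by a - 1 and [key i < key j + b n].
   (i) Every pair of indices at rank distance a - 1 lying between the ranks of
   a neighborhood of type (a + d, b) is a neighborhood of type (a, b), and
   there are d + 1 of them.
   (ii) Cut a neighborhood of type (m(a-1)+1, mb) into m steps of rank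
   distance a - 1; if none of them were of type (a, b), the key would drop by
   at least b n at each step, i.e. by m b n in total, which is too much. *)

From mathcomp Require Import all_boot all_order all_algebra.
From mathcomp Require Import zify ring.
Set Implicit Arguments. Unset Strict Implicit.
Import Order.TTheory GRing.Theory Num.Theory.
Local Open Scope ring_scope.

Section RankKey.
Variables (n : nat) (lam : 'I_n -> int).
Local Notation rank := (rho_rank lam).

Definition key (i : 'I_n) : int := lam i * n%:Z - (i : nat)%:Z.

Lemma precedes_key i j :
  ((lam i < lam j) || ((lam j == lam i) && (j < i)%N)) = (key i < key j).
Proof.
rewrite /key; have hi := ltn_ord i; have hj := ltn_ord j.
case: (ltrgtP (lam i) (lam j)) => h /=.
- by symmetry; apply/idP; nia.
- by symmetry; apply/negbTE; rewrite -leNgt; nia.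
- by rewrite h; apply/idP/idP; lia.
Qed.

Lemma key_inj : injective key.
Proof.
move=> i j eq_key; apply: val_inj.
have := precedes_key i j; have := precedes_key j i; rewrite eq_key ltxx.
case: (ltrgtP (lam i) (lam j)) => //= eq_lam _ _.
by move: eq_key; rewrite /key eq_lam => /addrI /oppr_inj [].
Qed.

Lemma rankE i : rank i = #|[set j | key i < key j]|.
Proof. by apply: eq_card => j; rewrite !inE precedes_key. Qed.

Lemma rank_lt i : (rank i < n)%N.
Proof.
rewrite rankE -[X in (_ < X)%N](card_ord n); apply: proper_card.
by apply/properP; split; [apply/subsetP | exists i; rewrite ?inE ?ltxx].
Qed.

Lemma rank_gt_key i j : key i < key j -> (rank j < rank i)%N.
Proof.
move=> lt_ij; rewrite !rankE; apply: proper_card; apply/properP; split.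
  by apply/subsetP => k; rewrite !inE => /(lt_trans lt_ij).
by exists j; rewrite !inE ?ltxx ?lt_ij.
Qed.

Lemma key_ge_rank i j : (rank i <= rank j)%N -> key j <= key i.
Proof. by move=> le_ij; rewrite leNgt; apply/negP => /rank_gt_key; lia. Qed.

Lemma rank_inj : injective rank.
Proof.
move=> i j eq_rank; case: (ltrgtP (key i) (key j)) => [||/key_inj //].
- by move/rank_gt_key; rewrite eq_rank ltnn.
- by move/rank_gt_key; rewrite eq_rank ltnn.
Qed.

(* [i0] is a default value, only returned for ranks [k >= n]. *)
Definition unrank (i0 : 'I_n) (k : nat) : 'I_n :=
  odflt i0 [pick x | rank x == k].

Lemma rank_unrank i0 k : (k < n)%N -> rank (unrank i0 k) = k.
Proof.
move=> lt_kn; rewrite /unrank; case: pickP => [x /eqP //|no_x] /=.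
pose rank_ord i := Ordinal (rank_lt i).
have rank_ord_inj : injective rank_ord by move=> x y [/rank_inj].
have /codomP [x /(congr1 val) /= eq_x] := injF_onto rank_ord_inj (Ordinal lt_kn).
by move: (no_x x); rewrite eq_x eqxx.
Qed.

Lemma unrank_rank i0 i : unrank i0 (rank i) = i.
Proof. by apply: rank_inj; rewrite rank_unrank // rank_lt. Qed.

Lemma rho_sub i j : rho lam i - rho lam j = ((rank j)%:Z - (rank i)%:Z)%:~R.
Proof. by rewrite /rho intrB -!pmulrn; ring. Qed.

Lemma is_nbhdE a b i j : is_nbhd lam a b i j =
  ((rank j)%:Z - (rank i)%:Z == a - 1) && (key i < key j + b * n%:Z).
Proof.
rewrite /is_nbhd rho_sub eqr_int; congr (_ && _).
rewrite /key; have hi := ltn_ord i; have hj := ltn_ord j.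
case: (ltrgtP (lam i - lam j) b) => h.
- have -> /= : lam i - lam j <= b - 1 by lia.
  by symmetry; apply/idP; nia.
- have -> /= : lam i - lam j <= b - 1 = false by lia.
  by symmetry; apply/negbTE; rewrite -leNgt; nia.
- have -> /= : lam i - lam j <= b - 1 = false by lia.
  have -> : lam i = lam j + b by lia.
  by apply/idP/idP; lia.
Qed.

Lemma is_nbhd_inner a c b i j i' j' :
  is_nbhd lam c b i j -> (rank i <= rank i')%N -> (rank j' <= rank j)%N ->
  (rank j')%:Z - (rank i')%:Z = a - 1 -> is_nbhd lam a b i' j'.
Proof.
rewrite !is_nbhdE => /andP [_ near_ij] /key_ge_rank le_i /key_ge_rank le_j dist.
by rewrite dist eqxx /=; lia.
Qed.

Lemma nbhd_card_ge a b (d : nat) i j :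
  1 <= a -> is_nbhd lam (a + d%:Z) b i j -> (d.+1 <= #|nbhds lam a b|)%N.
Proof.
move=> a_ge1 nbhd_ij; have := nbhd_ij; rewrite is_nbhdE => /andP [/eqP dist _].
have lt_j := rank_lt j.
pose A := `|a - 1|%N; have eA : a - 1 = A%:Z by lia.
pose pair (t : 'I_d.+1) :=
  (unrank i (rank i + t)%N, unrank i (rank i + t + A)%N).
have pair_inj : injective pair.
  move=> t1 t2; have := ltn_ord t1; have := ltn_ord t2 => lt2 lt1.
  case=> /(congr1 rank); rewrite !rank_unrank; try lia.
  by move=> eq_t _; apply: ord_inj; lia.
rewrite -[d.+1]card_ord -cardsT -(card_imset _ pair_inj).
apply: subset_leq_card; apply/subsetP => _ /imsetP [t _ ->].
have := ltn_ord t => lt_t.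
rewrite inE; apply: (is_nbhd_inner nbhd_ij); rewrite /= ?rank_unrank; lia.
Qed.

Lemma key_drop_no_nbhd a b x k :
  1 <= a -> nbhds lam a b = set0 ->
  (rank x + k * `|a - 1|%N < n)%N ->
  key (unrank x (rank x + k * `|a - 1|%N)) + k%:Z * b * n%:Z <= key x.
Proof.
move=> a_ge1 no_nbhd; set A := `|a - 1|%N; have eA : a - 1 = A%:Z by lia.
elim: k => [|k IH] lt_kn; first by rewrite addn0 unrank_rank mul0r mul0r addr0.
have lt_k : (rank x + k * A < n)%N by move: lt_kn; rewrite mulSn; lia.
have := in_set0 (unrank x (rank x + k * A), unrank x (rank x + k.+1 * A)).
rewrite -no_nbhd inE is_nbhdE !rank_unrank // mulSn.
have -> /= : (rank x + (A + k * A))%N%:Z - (rank x + k * A)%N%:Z == a - 1.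
  by apply/eqP; lia.
move=> /negbT; rewrite -leNgt; have := IH lt_k; rewrite -addn1 PoszD; lia.
Qed.

Lemma nbhd_of_scaled_nbhd a b (m : nat) i j :
  1 <= a -> is_nbhd lam (m%:Z * (a - 1) + 1) (m%:Z * b) i j ->
  nbhds lam a b != set0.
Proof.
move=> a_ge1; rewrite is_nbhdE => /andP [/eqP dist near_ij].
apply/negP => /eqP no_nbhd.
have rank_j : rank j = (rank i + m * `|a - 1|%N)%N by lia.
have := key_drop_no_nbhd (x := i) (k := m) a_ge1 no_nbhd; rewrite -rank_j unrank_rank.
by move=> /(_ (rank_lt j)); lia.
Qed.

End RankKey.

Theorem lemma4p2 (n : nat) (lam : 'I_n -> int) (a b d m : int) :
  2 <= a -> 1 <= b -> 1 <= d -> 1 <= m ->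
  ((nbhds lam (a + d) b != set0) ->
     (`|d|%N.+1 <= #|nbhds lam a b|)%N) /\
  ((nbhds lam (m * (a - 1) + 1) (m * b) != set0) ->
     (nbhds lam a b != set0)).
Proof.
move=> a_ge2 _ d_ge1 m_ge1.
have a_ge1 : 1 <= a by lia.
have [d_ge0 m_ge0] : 0 <= d /\ 0 <= m by split; lia.
split; case/set0Pn => [[i j]]; rewrite inE /=.
- by rewrite -{1}(gez0_abs d_ge0); apply: nbhd_card_ge.
- by rewrite -{1 2}(gez0_abs m_ge0); apply: nbhd_of_scaled_nbhd.
Qed.
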